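(* Let $T,s,k\in\mathbb{N}$ and let $w\in\{0,1\}^T$ be a random variable satisfying the $\epsilon$-martingale condition. Then \[ \Pr_w\bigl[\text{there is a decomposition } w=xyz \text{ with } |x|=s-1,\ |y|\ge k, \text{ such that } \mu_x(y)\ge0\bigr]\le O(1)\cdot\exp(-\Omega(k)). \]
   Context: Characteristic strings and forks. A characteristic string is $w=w_1\dots w_n\in\{0,1\}^n$; index $i$ is honest if $w_i=0$ and adversarial if $w_i=1$. A fork for $w$ is a rooted tree with edges directed away from the root $r$ and labeling $\ell:V\to\{0,\dots,n\}$ with (F1) $\ell(r)=0$; (F2) labels strictly increasing along directed paths; (F3) each honest index labels exactly one vertex; (F4) for honest $i<j$ the vertex labeled $i$ has strictly smaller depth than the vertex labeled $j$. Write $F\vdash w$. A vertex is honest if it is the root or labeled by an honest index. A tine is a directed path from the root; its length is its number of edges, $\ell(t)$ the label of its last vertex. A fork is closed if every leaf is honest; a closed fork has a unique longest tine $\hat t$. For closed $F\vdash w$ and tine $t$: $\mathrm{gap}(t)=\mathrm{length}(\hat t)-\mathrm{length}(t)$, $\mathrm{reserve}(t)=|\{i:w_i=1,\ i>\ell(t)\}|$, $\mathrm{reach}(t)=\mathrm{reserve}(t)-\mathrm{gap}(t)$. For $w=xy$, tines are disjoint over $y$ if they share no edge terminating at a vertex with label $>|x|$ (a tine may be paired with itself). $\mu_x(F)=\max\min\{\mathrm{reach}(t_1),\mathrm{reach}(t_2)\}$ over pairs disjoint over $y$, and $\mu_x(y)=\max\{\mu_x(F):F\vdash xy\text{ closed}\}$.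 A random variable $W\in\{0,1\}^n$ satisfies the $\epsilon$-martingale condition ($\epsilon\in(0,1)$) if for every $t$, $\Pr[W_t=1\mid W_1,\dots,W_{t-1}]\le(1-\epsilon)/2$. The asymptotic constants may depend on $\epsilon$. *)

From HB Require Import structures.
From mathcomp Require Import all_boot all_order all_algebra.
From mathcomp Require Import boolp reals sequences exp.
Set Implicit Arguments. Unset Strict Implicit. Unset Printing Implicit Defensive.
Import Order.TTheory GRing.Theory Num.Theory.

(* Characteristic strings: w : seq bool, w_i = nth false w i.-1 for 1 <= i <= size w;
   true = 1 = adversarial, false = 0 = honest. *)
Definition honest_idx (w : seq bool) (i : nat) : bool :=
  (0 < i <= size w) && ~~ nth false w i.-1.
Definition adv_idx (w : seq bool) (i : nat) : bool :=
  (0 < i <= size w) && nth false w i.-1.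

(* A rooted tree with vertices 0 .. fsize-1, root 0, parent map fpar
   (fpar v < v for non-root v, so every finite rooted tree is representable,
   e.g. via BFS numbering), and labeling flab. *)
Record fork := Fork { fsize : nat; fpar : nat -> nat; flab : nat -> nat }.

Fixpoint depth_aux (par : nat -> nat) (f v : nat) : nat :=
  match f with
  | 0 => 0
  | f'.+1 => if v == 0 then 0 else (depth_aux par f' (par v)).+1
  end.
Definition depth (F : fork) (v : nat) : nat := depth_aux (fpar F) v v.

Fixpoint anc_aux (par : nat -> nat) (f u v : nat) : bool :=
  match f with
  | 0 => u == v
  | f'.+1 => (u == v) || ((v != 0) && anc_aux par f' u (par v))
  end.
Definition on_tine (F : fork) (u v : nat) : bool := anc_aux (fpar F) v u v.

Definition is_fork (w : seq bool) (F : fork) : Prop :=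
  [/\ 0 < fsize F /\ flab F 0 = 0,
      (forall v, 0 < v < fsize F ->
         fpar F v < v /\ flab F (fpar F v) < flab F v),
      (forall v, v < fsize F -> flab F v <= size w),
      (forall i, honest_idx w i ->
         count (fun v => flab F v == i) (iota 0 (fsize F)) = 1)
    & (forall u v, u < fsize F -> v < fsize F ->
         honest_idx w (flab F u) -> honest_idx w (flab F v) ->
         flab F u < flab F v -> depth F u < depth F v)].

Definition honest_vertex (w : seq bool) (F : fork) (v : nat) : bool :=
  (v == 0) || honest_idx w (flab F v).
Definition is_leaf (F : fork) (v : nat) : bool :=
  all (fun u => (u == 0) || (fpar F u != v)) (iota 0 (fsize F)).
Definition closed_fork (w : seq bool) (F : fork) : Prop :=
  forall v, v < fsize F -> is_leaf F v -> honest_vertex w F v.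

Definition height (F : fork) : nat := \max_(v < fsize F) depth F v.
Definition gap (F : fork) (v : nat) : nat := height F - depth F v.
Definition reserve (w : seq bool) (F : fork) (v : nat) : nat :=
  count (fun i => adv_idx w i && (flab F v < i)) (iota 1 (size w)).
Definition reach (w : seq bool) (F : fork) (v : nat) : int :=
  (reserve w F v)%:Z - (gap F v)%:Z.

(* tines ending at u and v are disjoint over y (|x| = a): they share no
   edge terminating at a vertex with label > a *)
Definition disjoint_over (F : fork) (a u v : nat) : bool :=
  all (fun q => ~~ [&& 0 < q, on_tine F q u, on_tine F q v & a < flab F q])
      (iota 0 (fsize F)).

(* mu_x(F) for F |- x ++ y: maximum over pairs of tines disjoint over y of the
   minimum reach; the pair (root, root) is always admissible, so its value
   serves as the (harmless) default of the iterated max. *)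
Definition mu_fork (x y : seq bool) (F : fork) : int :=
  let w := x ++ y in
  let r0 := reach w F 0 in
  \big[Num.max/r0]_(u < fsize F)
    \big[Num.max/r0]_(v < fsize F | disjoint_over F (size x) u v)
      Num.min (reach w F u) (reach w F v).

Definition mu_nonneg (x y : seq bool) : Prop :=
  exists F, [/\ is_fork (x ++ y) F, closed_fork (x ++ y) F & (0 <= mu_fork x y F)%R].

Definition is_distr (R : realType) (T : nat) (p : T.-tuple bool -> R) : Prop :=
  (forall w, (0 <= p w)%R) /\ (\sum_(w : T.-tuple bool) p w = 1)%R.

(* epsilon-martingale condition: Pr[W_{t+1} = 1 | W_1..W_t = b] <= (1-eps)/2,
   written multiplicatively (vacuous on null prefixes). *)
Definition martingale_cond (R : realType) (T : nat) (eps : R)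
    (p : T.-tuple bool -> R) : Prop :=
  forall t : nat, t < T -> forall b : seq bool, size b = t ->
    (\sum_(w : T.-tuple bool | (take t w == b) && nth false w t) p w
      <= (1 - eps) / 2 * \sum_(w : T.-tuple bool | take t w == b) p w)%R.

Definition Pr (R : realType) (T : nat) (p : T.-tuple bool -> R)
    (E : T.-tuple bool -> Prop) : R :=
  (\sum_(w : T.-tuple bool) if `[< E w >] then p w else 0)%R.

Definition bad_event (s k T : nat) (w : T.-tuple bool) : Prop :=
  exists x y z : seq bool,
    [/\ tval w = x ++ y ++ z, size x = s.-1, k <= size y & mu_nonneg x y].

(* The reach of a tine in a fork for w_1..w_m is at most rho(w_1..w_m), where
   rho moves up on adversarial slots and down (stopping at 0) on honest ones;
   likewise min(reach t1, reach t2) over tines disjoint over y is at most the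
   classical recursion mu_rec for the relative margin mu_x(y).  Hence the bad
   event forces mu_rec >= 0 for some |y| = d >= k.  The potential
   V(rho, mu) = f(mu) gamma^(rho - mu) is at least 1 when 0 <= mu <= rho, and
   under the e-martingale condition its expectation shrinks by a factor
   lam < 1 with each symbol of y, starting from E[beta^rho(x)] <= beta/(1-lam).
   A union bound over d >= k and a geometric series give C lam^k. *)

From HB Require Import structures.
From mathcomp Require Import all_boot all_order all_algebra.
From mathcomp Require Import boolp reals sequences exp.
From mathcomp Require Import zify ring lra.
Import Order.TTheory GRing.Theory Num.Theory.
Set Implicit Arguments. Unset Strict Implicit. Unset Printing Implicit Defensive.

Section TreeStructure.
Variable F : fork.
Hypothesis fpar_lt : forall v, 0 < v < fsize F -> fpar F v < v.

Lemma depth_aux_fuel f v : v < fsize F -> v <= f ->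
  depth_aux (fpar F) f v = depth_aux (fpar F) v v.
Proof.
elim: v {-2}v (leqnn v) f => [|n IH] v Hvn f Hv Hvf.
  by move: Hvn; rewrite leqn0 => /eqP ->; case: f {Hvf}.
case: v Hvn Hv Hvf => [|v] Hvn Hv Hvf; first by case: f {Hvf}.
case: f Hvf => [//|f] Hvf /=.
have Hp := fpar_lt (v := v.+1) (ltac:(by rewrite Hv)).
have Hpn : fpar F v.+1 <= n by lia.
have Hpsize : fpar F v.+1 < fsize F by lia.
by rewrite (IH _ Hpn f Hpsize) ?(IH _ Hpn v Hpsize) //; lia.
Qed.

Lemma depth_par v : 0 < v < fsize F -> depth F v = (depth F (fpar F v)).+1.
Proof.
case: v => [//|v] /= Hv; rewrite /depth /=; congr S.
have Hp := fpar_lt (v := v.+1) (ltac:(by rewrite Hv)).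
by rewrite depth_aux_fuel //; lia.
Qed.

Lemma anc_aux_fuel u f v : v < fsize F -> v <= f ->
  anc_aux (fpar F) f u v = anc_aux (fpar F) v u v.
Proof.
elim: v {-2}v (leqnn v) f => [|n IH] v Hvn f Hv Hvf.
  by move: Hvn; rewrite leqn0 => /eqP ->; case: f {Hvf} => //= f; rewrite orbF.
case: v Hvn Hv Hvf => [|v] Hvn Hv Hvf; first by case: f {Hvf} => //= f; rewrite orbF.
case: f Hvf => [//|f] Hvf /=; congr orb.
have Hp := fpar_lt (v := v.+1) (ltac:(by rewrite Hv)).
have Hpn : fpar F v.+1 <= n by lia.
have Hpsize : fpar F v.+1 < fsize F by lia.
by rewrite (IH _ Hpn f Hpsize) ?(IH _ Hpn v Hpsize) //; lia.
Qed.

Lemma on_tine_par q v : 0 < v < fsize F ->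
  on_tine F q v = (q == v) || on_tine F q (fpar F v).
Proof.
case: v => [//|v] /= Hv; rewrite /on_tine /=.
have Hp := fpar_lt (v := v.+1) (ltac:(by rewrite Hv)).
by rewrite (anc_aux_fuel _ (f := v)) //; lia.
Qed.

Lemma on_tine_refl v : on_tine F v v.
Proof. by rewrite /on_tine; case: v => //= v; rewrite eqxx. Qed.

Lemma disjoint_overC a u v : disjoint_over F a u v = disjoint_over F a v u.
Proof.
apply: eq_all => q.
by case: (0 < q); case: (on_tine F q u); case: (on_tine F q v).
Qed.

Lemma disjoint_over_par a u v : 0 < u < fsize F ->
  disjoint_over F a u v -> disjoint_over F a (fpar F u) v.
Proof.
move=> Hu /allP Hdis; apply/allP => q Hq; move: (Hdis q Hq).
by rewrite (on_tine_par q Hu); apply: contra => /and4P [-> -> -> ->]; rewrite orbT.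
Qed.

End TreeStructure.

(* [mu_rec w a d] stands for mu_x(y) with x = w_1..w_a, y = w_(a+1)..w_(a+d);
   only the bound mu_x(F) <= mu_rec is proved, not the equality. *)
Definition rho_step (b : bool) (r : nat) : nat := if b then r.+1 else r.-1.

Definition mu_step (b : bool) (r : nat) (u : int) : int :=
  if b then (u + 1)%R else if (0 < r) && (u == 0%R) then 0%R else (u - 1)%R.

Fixpoint rho (w : seq bool) (m : nat) : nat :=
  if m is m'.+1 then rho_step (nth false w m') (rho w m') else 0.

Fixpoint mu_rec (w : seq bool) (a d : nat) : int :=
  if d is d'.+1 then mu_step (nth false w (a + d')) (rho w (a + d')) (mu_rec w a d')
  else (rho w a)%:Z.

Lemma mu_rec_le_rho w a d : (mu_rec w a d <= (rho w (a + d))%:Z)%R.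
Proof.
elim: d => [|d IH] /=; first by rewrite addn0.
rewrite addnS /= /mu_step /rho_step.
case: (nth false w (a + d)); first by move: IH; lia.
by case: ifP => _; move: IH; lia.
Qed.

Lemma rho_take w t m : m <= t -> rho (take t w) m = rho w m.
Proof. by elim: m => [//|m IH] Hm /=; rewrite nth_take ?IH //; lia. Qed.

Lemma mu_rec_take w t a d : a + d <= t -> mu_rec (take t w) a d = mu_rec w a d.
Proof.
elim: d => [|d IH] Hd /=; first by rewrite rho_take //; lia.
by rewrite nth_take ?rho_take ?IH //; lia.
Qed.

Lemma adv_idxS w m : m < size w -> adv_idx w m.+1 = nth false w m.
Proof. by move=> Hm; rewrite /adv_idx Hm. Qed.

Lemma honest_idxS w m : m < size w -> honest_idx w m.+1 = ~~ nth false w m.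
Proof. by move=> Hm; rewrite /honest_idx Hm. Qed.

Section ForkPrefix.
Variables (w : seq bool) (F : fork).
Hypothesis HF : is_fork w F.

Lemma fork_par_lt v : 0 < v < fsize F -> fpar F v < v.
Proof. by case: HF => _ H _ _ _ /H []. Qed.

Lemma fork_lab_par_lt v : 0 < v < fsize F -> flab F (fpar F v) < flab F v.
Proof. by case: HF => _ H _ _ _ /H []. Qed.

Lemma fork_lab0 : flab F 0 = 0.
Proof. by case: HF => [[]]. Qed.

Lemma fork_lab_le v : v < fsize F -> flab F v <= size w.
Proof. by case: HF => _ _ H _ _ /H. Qed.

Lemma fork_lab_eq0 v : v < fsize F -> flab F v = 0 -> v = 0.
Proof.
case: v => // v Hv; have := fork_lab_par_lt (v := v.+1) (ltac:(by rewrite Hv)); lia.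
Qed.

Lemma fork_honest_lab i : honest_idx w i -> exists2 v, v < fsize F & flab F v = i.
Proof.
case: HF => _ _ _ H _ /H Hc.
have : has (fun v => flab F v == i) (iota 0 (fsize F)) by rewrite has_count Hc.
by case/hasP => v; rewrite mem_iota add0n => /andP [_ Hv] /eqP <-; exists v.
Qed.

Lemma fork_honest_lab_inj i u v : honest_idx w i -> u < fsize F -> v < fsize F ->
  flab F u = i -> flab F v = i -> u = v.
Proof.
case: HF => _ _ _ H _ /H Hc Hu Hv Hlu Hlv; apply/eqP; apply: contraT => Huv.
have : size [:: u; v] <= size (filter (fun v => flab F v == i) (iota 0 (fsize F))).
  apply: uniq_leq_size; first by rewrite /= inE andbT.
  by move=> x; rewrite !inE mem_filter mem_iota add0n => /orP [] /eqP ->;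
     rewrite ?Hlu ?Hlv eqxx.
by rewrite size_filter Hc.
Qed.

Lemma fork_honest_depth_lt u v : u < fsize F -> v < fsize F ->
  honest_idx w (flab F u) -> honest_idx w (flab F v) ->
  flab F u < flab F v -> depth F u < depth F v.
Proof. by case: HF => _ _ _ _; apply. Qed.

(* Reach computed as if the string stopped at slot m.  The height is taken over
   honest vertices only; for closed forks this is [height] (see reach_closed). *)
Definition hon_height (m : nat) : nat :=
  \max_(v < fsize F | honest_idx w (flab F v) && (flab F v <= m)) depth F v.

Definition reserve_upto (m v : nat) : nat :=
  count (fun i => adv_idx w i && (flab F v < i)) (iota 1 m).

Definition reach_upto (m v : nat) : int :=
  ((reserve_upto m v)%:Z + (depth F v)%:Z - (hon_height m)%:Z)%R.

Lemma hon_height_le m d :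
  (forall v, v < fsize F -> honest_idx w (flab F v) -> flab F v <= m -> depth F v <= d) ->
  hon_height m <= d.
Proof. by move=> H; apply/bigmax_leqP => v /andP []; apply: H. Qed.

Lemma depth_le_hon_height m v : v < fsize F -> honest_idx w (flab F v) -> flab F v <= m ->
  depth F v <= hon_height m.
Proof.
move=> Hv Hh Hl.
by apply: (leq_bigmax_cond (Ordinal Hv) (F := fun v : 'I_(fsize F) => depth F v));
   rewrite /= Hh Hl.
Qed.

Lemma reserve_uptoS m v :
  reserve_upto m.+1 v = reserve_upto m v + (adv_idx w m.+1 && (flab F v < m.+1)).
Proof.
rewrite /reserve_upto.
have -> : iota 1 m.+1 = iota 1 m ++ [:: m.+1] by rewrite -(addn1 m) iotaD add1n addn1.
by rewrite count_cat /= addn0.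
Qed.

Lemma reserve_upto_small m v : m <= flab F v -> reserve_upto m v = 0.
Proof.
move=> Hm; rewrite /reserve_upto (eq_in_count (a2 := pred0)) ?count_pred0 // => i.
by rewrite mem_iota => /andP [_ Hi] /=; apply/negbTE/nandP; right; rewrite -leqNgt; lia.
Qed.

Lemma hon_height_adv m : m < size w -> nth false w m -> hon_height m.+1 = hon_height m.
Proof.
move=> Hm Hb; apply/eqP; rewrite eqn_leq; apply/andP; split;
  apply: hon_height_le => v Hv Hh Hl; apply: depth_le_hon_height => //; last lia.
by move: Hl Hh; rewrite leq_eqVlt => /orP [/eqP ->|//]; rewrite honest_idxS // Hb.
Qed.

Lemma hon_height_honest m : m < size w -> ~~ nth false w m ->
  exists2 vs, vs < fsize F & [/\ flab F vs = m.+1,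
     hon_height m.+1 = depth F vs & hon_height m < depth F vs].
Proof.
move=> Hm Hb.
have Hh : honest_idx w m.+1 by rewrite honest_idxS.
case: (fork_honest_lab Hh) => vs Hvs Hl.
have Hvs0 : 0 < vs < fsize F.
  by rewrite Hvs andbT lt0n; apply/eqP => E; move: Hl; rewrite E fork_lab0.
have Hlt : hon_height m < depth F vs.
  rewrite (depth_par fork_par_lt Hvs0) ltnS; apply: hon_height_le => v Hv Hhv Hlv.
  have := fork_honest_depth_lt Hv Hvs Hhv (ltac:(by rewrite Hl)) (ltac:(by rewrite Hl)).
  by rewrite (depth_par fork_par_lt Hvs0); lia.
exists vs => //; split => //; apply/eqP; rewrite eqn_leq; apply/andP; split.
  apply: hon_height_le => v Hv Hhv; rewrite leq_eqVlt => /orP [/eqP Hlv|Hlv].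
    by rewrite (fork_honest_lab_inj Hh Hv Hvs Hlv Hl).
  by have := depth_le_hon_height Hv Hhv (Hlv : flab F v <= m); lia.
by apply: depth_le_hon_height => //; rewrite Hl.
Qed.

Lemma fork_nonroot v : v < fsize F -> 0 < flab F v -> 0 < v < fsize F.
Proof.
by move=> Hv Hl; rewrite Hv andbT lt0n; apply/eqP => E; move: Hl; rewrite E fork_lab0.
Qed.

Lemma reach_upto_adv m v : m < size w -> nth false w m -> flab F v <= m ->
  reach_upto m.+1 v = (reach_upto m v + 1)%R.
Proof.
move=> Hm Hb Hl; rewrite /reach_upto hon_height_adv // reserve_uptoS adv_idxS // Hb.
by rewrite ltnS Hl; lia.
Qed.

Lemma reach_upto_adv_fresh m v : m < size w -> nth false w m -> 0 < v < fsize F ->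
  flab F v = m.+1 -> (reach_upto m.+1 v <= reach_upto m (fpar F v) + 1)%R.
Proof.
move=> Hm Hb Hv Hl; have Hlp := fork_lab_par_lt Hv.
rewrite /reach_upto hon_height_adv // reserve_upto_small ?Hl //.
by rewrite (depth_par fork_par_lt Hv); lia.
Qed.

Lemma reach_upto_honest m v : m < size w -> ~~ nth false w m ->
  hon_height m < hon_height m.+1 -> (reach_upto m.+1 v <= reach_upto m v - 1)%R.
Proof.
by move=> Hm Hb Hlt; rewrite /reach_upto reserve_uptoS adv_idxS // (negbTE Hb); lia.
Qed.

Lemma reach_upto_honest_fresh m v : flab F v = m.+1 -> hon_height m.+1 = depth F v ->
  reach_upto m.+1 v = 0%R.
Proof. by move=> Hl Hh; rewrite /reach_upto Hh reserve_upto_small ?Hl //; lia. Qed.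

Lemma reach_upto_le_rho m v : m <= size w -> v < fsize F -> flab F v <= m ->
  (reach_upto m v <= (rho w m)%:Z)%R.
Proof.
elim: m v => [|m IH] v Hm Hv Hl.
  by rewrite (fork_lab_eq0 Hv (ltac:(lia))) /reach_upto /reserve_upto /depth /=; lia.
have Hm' : m < size w by [].
rewrite /= /rho_step; case Hb: (nth false w m).
  have IHp u : u < fsize F -> flab F u <= m -> (reach_upto m.+1 u <= (rho w m).+1%:Z)%R.
    by move=> Hu Hlu; rewrite reach_upto_adv //; have := IH u (ltnW Hm') Hu Hlu; lia.
  move: Hl; rewrite leq_eqVlt => /orP [/eqP Hl|]; last exact: IHp.
  have Hv0 := fork_nonroot Hv (ltac:(by rewrite Hl)).
  have Hlp := fork_lab_par_lt Hv0; have Hp := fork_par_lt Hv0.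
  have := reach_upto_adv_fresh Hm' Hb Hv0 Hl.
  by have := IH (fpar F v) (ltnW Hm') (ltac:(lia)) (ltac:(lia)); lia.
have Hb' : ~~ nth false w m by rewrite Hb.
have [vs Hvs [Hlvs Hnew Hlt]] := hon_height_honest Hm' Hb'.
move: Hl; rewrite leq_eqVlt => /orP [/eqP Hl|Hl].
  have Hh : honest_idx w m.+1 by rewrite honest_idxS.
  by rewrite (fork_honest_lab_inj Hh Hv Hvs Hl Hlvs) (reach_upto_honest_fresh Hlvs Hnew).
have := reach_upto_honest v Hm' Hb' (ltac:(lia)).
by have := IH v (ltnW Hm') Hv Hl; lia.
Qed.

Definition disjoint_reach_le (a m : nat) (M : int) : Prop :=
  forall u v, u < fsize F -> v < fsize F -> flab F u <= m -> flab F v <= m ->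
    disjoint_over F a u v -> (Num.min (reach_upto m u) (reach_upto m v) <= M)%R.

Lemma disjoint_reach_le_rho a : a <= size w -> disjoint_reach_le a a (rho w a).
Proof.
move=> Ha u v Hu _ Hlu _ _.
by rewrite ge_min (reach_upto_le_rho Ha Hu Hlu).
Qed.

Lemma disjoint_reach_le_adv a m M : m < size w -> nth false w m ->
  disjoint_reach_le a m M -> disjoint_reach_le a m.+1 (M + 1)%R.
Proof.
move=> Hm Hb IH.
have old x : x < fsize F -> flab F x <= m.+1 ->
    exists x', [/\ x' < fsize F, flab F x' <= m,
      (reach_upto m.+1 x <= reach_upto m x' + 1)%R &
      forall y, disjoint_over F a x y -> disjoint_over F a x' y].
  move=> Hx; rewrite leq_eqVlt => /orP [/eqP Hl|Hl]; last first.
    by exists x; split => //; rewrite (reach_upto_adv Hm Hb Hl).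
  have Hx0 := fork_nonroot Hx (ltac:(by rewrite Hl)).
  have Hlp := fork_lab_par_lt Hx0; have Hp := fork_par_lt Hx0.
  exists (fpar F x); split; [lia | lia | exact: reach_upto_adv_fresh |].
  by move=> y; apply: (disjoint_over_par fork_par_lt Hx0).
move=> u v Hu Hv Hlu Hlv Hdis.
have [u' [Hu' Hlu' Hru Hdu]] := old u Hu Hlu.
have [v' [Hv' Hlv' Hrv Hdv]] := old v Hv Hlv.
have Hdis' : disjoint_over F a u' v'.
  by rewrite disjoint_overC; apply: Hdv; rewrite disjoint_overC; apply: Hdu.
have := IH u' v' Hu' Hv' Hlu' Hlv' Hdis'.
by rewrite !ge_min => /orP [] H; apply/orP; [left | right]; move: H Hru Hrv; lia.
Qed.

Lemma mu_step_honest_ge m M : (M - 1 <= mu_step false m M)%R.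
Proof. by rewrite /mu_step; case: ifP => // /andP [_ /eqP ->]. Qed.

(* The new honest vertex has reach 0; its parent had nonnegative reach, so
   either the partner tine loses one unit or mu stays nonnegative. *)
Lemma disjoint_reach_fresh_honest a m M vs y : m < size w -> ~~ nth false w m ->
  disjoint_reach_le a m M -> vs < fsize F -> flab F vs = m.+1 ->
  hon_height m.+1 = depth F vs -> hon_height m < depth F vs ->
  y < fsize F -> flab F y <= m -> disjoint_over F a vs y ->
  (Num.min (reach_upto m.+1 vs) (reach_upto m.+1 y) <= mu_step false (rho w m) M)%R.
Proof.
move=> Hm Hb IH Hvs Hlvs Hnew Hlt Hy Hly Hdis.
have Hvs0 := fork_nonroot Hvs (ltac:(by rewrite Hlvs)).
have Hlc := fork_lab_par_lt Hvs0; have Hc := fork_par_lt Hvs0.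
have Hdc := disjoint_over_par fork_par_lt Hvs0 Hdis.
have Hc_ge0 : (0 <= reach_upto m (fpar F vs))%R.
  by move: Hlt; rewrite /reach_upto (depth_par fork_par_lt Hvs0); lia.
have Hy_drop := reach_upto_honest y Hm Hb (ltac:(lia)).
have Hy_rho := reach_upto_le_rho (ltnW Hm) Hy Hly.
have M_ge := mu_step_honest_ge (rho w m) M.
rewrite (reach_upto_honest_fresh Hlvs Hnew) ge_min.
have := IH (fpar F vs) y (ltac:(lia)) Hy (ltac:(lia)) Hly Hdc.
rewrite ge_min => /orP [Hc_le|Hy_le]; last by apply/orP; right; lia.
have [Hy_le|Hy_gt] := lerP (reach_upto m y) M; first by apply/orP; right; lia.
apply/orP; left; rewrite /mu_step.
have -> : 0 < rho w m by lia.
by case: eqP => //= HM; lia.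
Qed.

Lemma disjoint_reach_le_honest a m M : a <= m -> m < size w -> ~~ nth false w m ->
  disjoint_reach_le a m M -> disjoint_reach_le a m.+1 (mu_step false (rho w m) M).
Proof.
move=> Ham Hm Hb IH u v Hu Hv Hlu Hlv Hdis.
have [vs Hvs [Hlvs Hnew Hlt]] := hon_height_honest Hm Hb.
have Hh : honest_idx w m.+1 by rewrite honest_idxS.
have old x : x < fsize F -> flab F x <= m.+1 -> x != vs -> flab F x <= m.
  move=> Hx; rewrite leq_eqVlt => /orP [/eqP Hl|//].
  by rewrite (fork_honest_lab_inj Hh Hx Hvs Hl Hlvs) eqxx.
have fresh := disjoint_reach_fresh_honest Hm Hb IH Hvs Hlvs Hnew Hlt.
case: (eqVneq u vs) => [Eu|Hu']; case: (eqVneq v vs) => [Ev|Hv'].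
- move: Hdis; rewrite Eu Ev => /allP /(_ vs); rewrite mem_iota Hvs on_tine_refl Hlvs.
  by have := fork_nonroot Hvs (ltac:(by rewrite Hlvs)); case/andP => -> _ /(_ isT); lia.
- by rewrite Eu; apply: fresh; rewrite -?Eu //; apply: old.
- by rewrite minC Ev; apply: fresh; rewrite 1?disjoint_overC -?Ev //; apply: old.
have := IH u v Hu Hv (old u Hu Hlu Hu') (old v Hv Hlv Hv') Hdis.
have := reach_upto_honest u Hm Hb (ltac:(lia)).
have := reach_upto_honest v Hm Hb (ltac:(lia)).
have := mu_step_honest_ge (rho w m) M.
by rewrite !ge_min => ? ? ? /orP [] ?; apply/orP; [left | right]; lia.
Qed.

Lemma disjoint_reach_le_mu_rec a d : a + d <= size w ->
  disjoint_reach_le a (a + d) (mu_rec w a d).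
Proof.
elim: d => [|d IH] Had; first by rewrite addn0; apply: disjoint_reach_le_rho; lia.
rewrite addnS /= /mu_step; have IHd := IH (ltac:(lia)).
case Hb: (nth false w (a + d)); first by apply: disjoint_reach_le_adv; rewrite // -?addnS.
by apply: disjoint_reach_le_honest; rewrite ?Hb //; lia.
Qed.

End ForkPrefix.

Section ClosedFork.
Variables (w : seq bool) (F : fork).
Hypotheses (HF : is_fork w F) (HC : closed_fork w F).

Lemma closed_depth_le v : v < fsize F -> depth F v <= hon_height w F (size w).
Proof.
move: {2}(fsize F - v) (leqnn (fsize F - v)) => n.
elim: n v => [|n IH] v Hn Hv; first lia.
case Hleaf: (is_leaf F v).
  move: (HC Hv Hleaf) => /orP [/eqP -> //|Hh].
  exact: depth_le_hon_height (fork_lab_le HF Hv).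
move/negbT/allPn: Hleaf => [u]; rewrite mem_iota add0n => /andP [_ Hu].
rewrite negb_or negbK => /andP [Hu0 /eqP Hpu].
have Hu' : 0 < u < fsize F by rewrite lt0n Hu0.
have Hp := fork_par_lt HF Hu'; rewrite Hpu in Hp.
by have := IH u (ltac:(lia)) Hu; rewrite (depth_par (fork_par_lt HF) Hu') Hpu; lia.
Qed.

Lemma height_closed : height F = hon_height w F (size w).
Proof.
apply/eqP; rewrite eqn_leq; apply/andP; split.
  by apply/bigmax_leqP => i _; apply: closed_depth_le.
by apply/bigmax_leqP => i _; apply: (leq_bigmax (F := fun i : 'I_(fsize F) => depth F i)).
Qed.

Lemma reach_closed v : v < fsize F -> reach w F v = reach_upto w F (size w) v.
Proof.
move=> Hv; rewrite /reach /reach_upto /gap /reserve /reserve_upto height_closed.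
by have := closed_depth_le Hv; lia.
Qed.

End ClosedFork.

Lemma mu_fork_le_mu_rec x y F : is_fork (x ++ y) F -> closed_fork (x ++ y) F ->
  (mu_fork x y F <= mu_rec (x ++ y) (size x) (size y))%R.
Proof.
move=> HF HC.
have Hpair u v : u < fsize F -> v < fsize F -> disjoint_over F (size x) u v ->
    (Num.min (reach (x ++ y) F u) (reach (x ++ y) F v) <= mu_rec (x ++ y) (size x) (size y))%R.
  move=> Hu Hv; rewrite !(reach_closed HF HC) // size_cat.
  apply: disjoint_reach_le_mu_rec; rewrite -?size_cat ?fork_lab_le //.
have Hroot : (reach (x ++ y) F 0 <= mu_rec (x ++ y) (size x) (size y))%R.
  rewrite -[reach _ _ 0]minxx; apply: Hpair; first by case: HF => [[]].
    by case: HF => [[]].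
  by apply/allP => q _; case: q.
apply: (big_ind (fun z => z <= _)%R) => // [a b Ha Hb|u _]; first by rewrite ge_max Ha Hb.
apply: (big_ind (fun z => z <= _)%R) => // [a b Ha Hb|v]; first by rewrite ge_max Ha Hb.
exact: Hpair.
Qed.

Lemma bad_event_mu_rec s k T (w : T.-tuple bool) : bad_event s k w ->
  exists2 d, k <= d /\ s.-1 + d <= T & (0 <= mu_rec w s.-1 d)%R.
Proof.
case=> x [y [z [Hw Hx Hy [F [HF HC Hmu]]]]].
exists (size y); first by rewrite -Hx -(size_tuple w) Hw !size_cat; split; lia.
have Htake : take (s.-1 + size y) w = x ++ y.
  by rewrite Hw catA take_size_cat // size_cat Hx.
rewrite -(mu_rec_take w (t := s.-1 + size y)) // Htake -Hx.
exact: le_trans Hmu (mu_fork_le_mu_rec HF HC).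
Qed.

Local Open Scope ring_scope.

Lemma sum_by_prefix (V : nmodType) T t (G : T.-tuple bool -> V) : (t <= T)%N ->
  \sum_(w : T.-tuple bool) G w =
  \sum_(b : t.-tuple bool) \sum_(w : T.-tuple bool | take t w == b) G w.
Proof.
move=> Ht.
transitivity (\sum_(w : T.-tuple bool) \sum_(b : t.-tuple bool | take t w == b) G w).
  apply: eq_bigr => w _.
  have Hsz : size (take t w) == t by rewrite size_take size_tuple; case: ltngtP => //; lia.
  by rewrite (big_pred1 (Tuple Hsz)).
by rewrite (exchange_big_dep predT).
Qed.

(* A step that moves to g1 with probability at most q, and to g0 <= g1
   otherwise, has expectation at most h. *)
Definition drift (R : numDomainType) (q g0 g1 h : R) : Prop :=
  g0 <= g1 /\ q * g1 + (1 - q) * g0 <= h.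

Lemma driftZ (R : numDomainType) (q k0 k1 kh z : R) : 0 <= z ->
  drift q k0 k1 kh -> drift q (k0 * z) (k1 * z) (kh * z).
Proof.
move=> z0 [k01 Hk]; split; first exact: ler_wpM2r.
by rewrite mulrA [_ * (k0 * z)]mulrA -mulrDl; apply: ler_wpM2r.
Qed.

Lemma drift_le (R : numDomainType) (q g0 g1 h h' : R) : h <= h' ->
  drift q g0 g1 h -> drift q g0 g1 h'.
Proof. by move=> hh' [? ?]; split => //; apply: le_trans hh'. Qed.

Section MartingaleStep.
Variables (R : realType) (eps : R) (T : nat) (p : T.-tuple bool -> R).
Hypotheses (p_ge0 : forall w, 0 <= p w) (p_mart : martingale_cond eps p).

Lemma expect_next_bit t (g0 g1 h : seq bool -> R) : (t < T)%N ->
  (forall s, drift ((1 - eps) / 2) (g0 s) (g1 s) (h s)) ->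
  \sum_(w : T.-tuple bool) p w * (if nth false w t then g1 (take t w) else g0 (take t w))
  <= \sum_(w : T.-tuple bool) p w * h (take t w).
Proof.
move=> Ht Hdrift; set q := (1 - eps) / 2.
pose D s := g1 s - g0 s.
have D_ge0 s : 0 <= D s by rewrite subr_ge0; case: (Hdrift s).
have split_bit (w : T.-tuple bool) :
    p w * (if nth false w t then g1 (take t w) else g0 (take t w)) =
    p w * g0 (take t w) + (if nth false w t then p w * D (take t w) else 0).
  by case: (nth false w t); rewrite /D; ring.
rewrite (eq_bigr _ (fun w _ => split_bit w)) big_split /=.
have bit_prob b : size b = t ->
    \sum_(w : T.-tuple bool | take t w == b) (if nth false w t then p w * D (take t w) else 0)
    <= q * \sum_(w : T.-tuple bool | take t w == b) p w * D (take t w).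
  move=> Hb.
  have -> : \sum_(w : T.-tuple bool | take t w == b)
      (if nth false w t then p w * D (take t w) else 0) =
    D b * \sum_(w : T.-tuple bool | (take t w == b) && nth false w t) p w.
    rewrite big_mkcondr mulr_sumr; apply: eq_bigr => w /eqP ->.
    by case: (nth false w t); rewrite ?mulr0 // mulrC.
  have -> : \sum_(w : T.-tuple bool | take t w == b) p w * D (take t w) =
    D b * \sum_(w : T.-tuple bool | take t w == b) p w.
    by rewrite mulr_sumr; apply: eq_bigr => w /eqP ->; rewrite mulrC.
  rewrite mulrCA; apply: ler_wpM2l => //.
  exact: p_mart.
have : \sum_(w : T.-tuple bool) (if nth false w t then p w * D (take t w) else 0)
    <= q * \sum_(w : T.-tuple bool) p w * D (take t w).
  rewrite (sum_by_prefix _ (ltnW Ht)) [X in _ <= q * X](sum_by_prefix _ (ltnW Ht)).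
  by rewrite mulr_sumr; apply: ler_sum => b _; apply: bit_prob; rewrite size_tuple.
move=> /(lerD (lexx (\sum_(w : T.-tuple bool) p w * g0 (take t w)))) /le_trans; apply.
rewrite mulr_sumr -big_split /=; apply: ler_sum => w _.
have [_ Hh] := Hdrift (take t w).
rewrite /D (_ : _ + _ = p w * (q * g1 (take t w) + (1 - q) * g0 (take t w))); last by ring.
exact: ler_wpM2l.
Qed.

End MartingaleStep.

Section PotentialDefs.
Variables (R : realType) (e : R).

(* The constants are tuned so that the five one-step inequalities below hold
   for every 0 < e < 1. *)
Definition qadv : R := (1 - e) / 2.
Definition alpha : R := 1 - e.
Definition beta : R := 1 + e ^+ 2 / 4.
Definition gamma : R := 1 + e ^+ 2 / 2.
Definition lam : R := 1 - e ^+ 3 / 24.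

(* f(u) = beta^u for u >= 0 and alpha^|u| for u < 0 (recall Negz n = -n-1). *)
Definition phi (u : int) : R :=
  match u with Posz n => beta ^+ n | Negz n => alpha ^+ n.+1 end.

Definition potential (r : nat) (u : int) : R := phi u * gamma ^+ `|r%:Z - u|%N.

Lemma potential_pos n r : (n <= r)%N -> potential r n = beta ^+ n * gamma ^+ (r - n).
Proof. by move=> Hnr; rewrite /potential /=; congr (_ * _ ^+ _); lia. Qed.

Lemma potential_neg n r : potential r (Negz n) = alpha ^+ n.+1 * gamma ^+ (r + n.+1).
Proof. by rewrite /potential /=; congr (_ * _ ^+ _); lia. Qed.

Lemma potential_negS n r : potential r (Negz n + 1) = alpha ^+ n * gamma ^+ (r + n).
Proof.
case: n => [|n]; first by rewrite (_ : Negz 0 + 1 = 0) // potential_pos ?addn0.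
by rewrite (_ : Negz n.+1 + 1 = Negz n) ?potential_neg //; lia.
Qed.

End PotentialDefs.

Section PotentialBounds.
Variables (R : realType) (e : R).
Hypotheses (e_gt0 : 0 < e) (e_lt1 : e < 1).
Local Notation qadv := (qadv e).
Local Notation alpha := (alpha e).
Local Notation beta := (beta e).
Local Notation gamma := (gamma e).
Local Notation lam := (lam e).
Local Notation potential := (potential e).

Let e2_gt0 : 0 < e ^+ 2 := exprn_gt0 2 e_gt0.
Let e3_gt0 : 0 < e ^+ 3 := exprn_gt0 3 e_gt0.

Lemma alpha_ge0 : 0 <= alpha. Proof. by move: e_lt1; rewrite /alpha; lra. Qed.
Lemma alpha_le1 : alpha <= 1. Proof. by move: e_gt0; rewrite /alpha; lra. Qed.
Lemma beta_ge1 : 1 <= beta. Proof. have := e2_gt0; rewrite /beta; lra. Qed.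
Lemma gamma_ge1 : 1 <= gamma. Proof. have := e2_gt0; rewrite /gamma; lra. Qed.
Lemma lam_lt1 : lam < 1. Proof. have := e3_gt0; rewrite /lam; lra. Qed.

Lemma lam_gt0 : 0 < lam.
Proof. have : e ^+ 3 <= 1 by apply: exprn_ile1; apply: ltW. rewrite /lam; lra. Qed.

Lemma alpha_gamma_le1 : alpha * gamma <= 1.
Proof.
have := e2_gt0; have := e3_gt0; move: e_gt0 e_lt1.
by rewrite /alpha /gamma (exprS e 2); nra.
Qed.

Lemma drift_pos : drift qadv 1 (beta * beta) (lam * beta).
Proof.
split; first by have := beta_ge1; nra.
rewrite -subr_ge0 (_ : _ - _ = e ^+ 3 * (5/24 - e/32 + e ^+ 2/48)).
  by apply: mulr_ge0; [exact: ltW e3_gt0 | have := e2_gt0; move: e_gt0 e_lt1; lra].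
by rewrite /lam /beta /qadv; field.
Qed.

Lemma drift_zero_pos : drift qadv 1 (beta * gamma) (lam * gamma).
Proof.
split; first by have := beta_ge1; have := gamma_ge1; nra.
rewrite -subr_ge0 (_ : _ - _ = e ^+ 2 * (1/8 + e/3 - e ^+ 2/16 + e ^+ 3/24)).
  by apply: mulr_ge0; [exact: ltW e2_gt0 | have := e2_gt0; have := e3_gt0; move: e_gt0 e_lt1; nra].
by rewrite /lam /beta /qadv /gamma; field.
Qed.

Lemma drift_zero_zero : drift qadv (alpha * gamma) beta lam.
Proof.
split; first by have := beta_ge1; have := alpha_gamma_le1; lra.
rewrite -subr_ge0 (_ : _ - _ = e * (1/2 + e/8 + e ^+ 2/12 + e ^+ 3/4)).
  by apply: mulr_ge0; [exact: ltW | have := e2_gt0; have := e3_gt0; move: e_gt0 e_lt1; nra].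
by rewrite /lam /beta /qadv /gamma /alpha; field.
Qed.

Lemma drift_neg_pos : drift qadv (alpha * alpha) 1 (lam * alpha).
Proof.
split; first by have := alpha_ge0; have := alpha_le1; nra.
rewrite -subr_ge0 (_ : _ - _ = e ^+ 2 * ((1 - e) * (1/2 - e/24))).
  by apply: mulr_ge0; [exact: ltW e2_gt0 | apply: mulr_ge0; move: e_gt0 e_lt1; lra].
by rewrite /lam /qadv /alpha; field.
Qed.

Lemma drift_neg_zero : drift qadv (alpha * alpha * gamma) 1 (lam * alpha).
Proof.
split; first by have := alpha_ge0; have := alpha_le1; have := alpha_gamma_le1; nra.
rewrite -subr_ge0 (_ : _ - _ = e ^+ 2 * ((1 - e) * (1/4 - e/24 + e ^+ 2/4))).
  by apply: mulr_ge0; [exact: ltW e2_gt0 | apply: mulr_ge0; have := e2_gt0; move: e_gt0 e_lt1; lra].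
by rewrite /lam /qadv /alpha /gamma; field.
Qed.

Lemma potential_ge0 r u : 0 <= potential r u.
Proof.
have := alpha_ge0; have := beta_ge1; have := gamma_ge1.
by case: u => n /= *; apply: mulr_ge0; apply: exprn_ge0; lra.
Qed.

Lemma potential_ge1 r n : (n <= r)%N -> 1 <= potential r n.
Proof.
by move=> Hnr; rewrite potential_pos //; apply: mulr_ege1; apply: exprn_ege1;
   [exact: beta_ge1 | exact: gamma_ge1].
Qed.

Lemma potential_drift_pos n r : (n < r)%N ->
  drift qadv (potential r.-1 n) (potential r.+1 n.+2) (lam * potential r n.+1).
Proof.
move=> Hnr; pose z := beta ^+ n * gamma ^+ (r - n.+1).
have -> : potential r.-1 n = 1 * z.
  by rewrite mul1r potential_pos /z; [congr (_ * _ ^+ _) |]; lia.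
have -> : potential r.+1 n.+2 = beta * beta * z.
  by rewrite potential_pos ?subSS // /z !exprS; ring.
have -> : lam * potential r n.+1 = lam * beta * z.
  by rewrite potential_pos // /z exprS; ring.
have b0 := le_trans ler01 beta_ge1; have g0 := le_trans ler01 gamma_ge1.
by apply: driftZ drift_pos; apply: mulr_ge0; apply: exprn_ge0.
Qed.

Lemma potential_drift_zero r :
  drift qadv (potential r.-1 (mu_step false r 0)) (potential r.+1 1) (lam * potential r 0).
Proof.
case: r => [|r].
  rewrite /= (_ : 0 - 1 = Negz 0) // potential_neg (@potential_pos _ e 1 1) //.
  by rewrite (@potential_pos _ e 0 0) // !expr1 !expr0 !mulr1; exact: drift_zero_zero.
have -> : potential r.+1.-1 (mu_step false r.+1 0) = 1 * gamma ^+ r.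
  by rewrite /= mul1r potential_pos // mul1r subn0.
have -> : potential r.+2 1 = beta * gamma * gamma ^+ r.
  by rewrite potential_pos // subSS subn0 expr1 exprS mulrA.
have -> : lam * potential r.+1 0 = lam * gamma * gamma ^+ r.
  by rewrite potential_pos // mul1r subn0 exprS mulrA.
by apply: driftZ drift_zero_pos; apply/exprn_ge0/(le_trans ler01 gamma_ge1).
Qed.

Lemma potential_drift_neg n r :
  drift qadv (potential r.-1 (Negz n.+1)) (potential r.+1 (Negz n + 1))
    (lam * potential r (Negz n)).
Proof.
have a0 := exprn_ge0 n alpha_ge0; have g0 n := exprn_ge0 n (le_trans ler01 gamma_ge1).
case: r => [|r].
  pose z := alpha ^+ n * gamma ^+ n.+1.
  rewrite /= !potential_neg potential_negS !add0n add1n.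
  have -> : alpha ^+ n.+2 * gamma ^+ n.+2 = alpha * alpha * gamma * z.
    by rewrite /z !exprS; ring.
  rewrite -[X in drift _ _ X _]mul1r -/z.
  have -> : lam * (alpha ^+ n.+1 * gamma ^+ n.+1) = lam * alpha * z.
    by rewrite /z exprS; ring.
  by apply: driftZ drift_neg_zero; apply: mulr_ge0.
pose z := alpha ^+ n * gamma ^+ (r + n).+2.
rewrite /= !potential_neg potential_negS !addnS !addSn.
have -> : alpha ^+ n.+2 * gamma ^+ (r + n).+2 = alpha * alpha * z.
  by rewrite /z !exprS; ring.
rewrite -[X in drift _ _ X _]mul1r -/z.
have -> : lam * (alpha ^+ n.+1 * gamma ^+ (r + n).+2) = lam * alpha * z.
  by rewrite /z exprS; ring.
by apply: driftZ drift_neg_pos; apply: mulr_ge0.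
Qed.

Lemma potential_drift r u : u <= r%:Z ->
  drift qadv (potential r.-1 (mu_step false r u)) (potential r.+1 (u + 1))
    (lam * potential r u).
Proof.
case: u => [[|n]|n] Hu; first exact: potential_drift_zero.
  have -> : mu_step false r n.+1 = n.
    by rewrite /mu_step /=; case: ifP => [/andP [_ /eqP]|_]; lia.
  have -> : Posz n.+1 + 1 = n.+2 by lia.
  by apply: potential_drift_pos; lia.
have -> : mu_step false r (Negz n) = Negz n.+1.
  by rewrite /mu_step /=; case: ifP => [/andP [_ /eqP]|_]; lia.
exact: potential_drift_neg.
Qed.

Lemma beta_rho_drift r :
  drift qadv (beta ^+ r.-1) (beta ^+ r.+1) (lam * beta ^+ r + beta).
Proof.
have b1 := beta_ge1.
case: r => [|r].
  rewrite expr0 expr1 mulr1; split => //.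
  have : 0 <= 1 - qadv by rewrite /qadv; move: e_gt0; lra.
  by have := lam_gt0; nra.
apply: drift_le (_ : lam * beta ^+ r.+1 <= _) _; first by rewrite lerDl; lra.
have := driftZ (exprn_ge0 r (le_trans ler01 b1)) drift_pos.
by rewrite mul1r -!mulrA -!exprS.
Qed.

End PotentialBounds.

Lemma sum_geometric_tail_le (R : realType) (x : R) k N : 0 < x < 1 ->
  \sum_(i < N | (k <= i)%N) x ^+ i <= x ^+ k / (1 - x).
Proof.
move=> /andP [x0 x1].
have xk0 : 0 <= x ^+ k by rewrite exprn_ge0 // ltW.
have -> : \sum_(i < N | (k <= i)%N) x ^+ i = \sum_(k <= i < N) x ^+ i.
  by rewrite big_geq_mkord.
have [kN|Nk] := leqP k N; last first.
  by rewrite big_geq ?(ltnW Nk) // divr_ge0 // subr_ge0 ltW.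
rewrite -(subnKC kN) geometric_partial_tail.
by apply: geometric_le_lim => //; rewrite ger0_norm // ltW.
Qed.

Section Expectation.
Variables (R : realType) (e : R) (T : nat) (p : T.-tuple bool -> R).
Hypotheses (e_gt0 : 0 < e) (e_lt1 : e < 1).
Hypotheses (p_distr : is_distr p) (p_mart : martingale_cond e p).

Let p_ge0 : forall w, 0 <= p w := p_distr.1.
Let p_sum1 : \sum_(w : T.-tuple bool) p w = 1 := p_distr.2.

Definition rho_bound : R := beta e / (1 - lam e).

Lemma expect_beta_rho t : (t <= T)%N ->
  \sum_(w : T.-tuple bool) p w * beta e ^+ rho w t <= rho_bound.
Proof.
have l1 := lam_lt1 e_gt0; have l0 := lam_gt0 e_gt0 e_lt1; have b1 := beta_ge1 e_gt0.
have bound_fix : rho_bound = lam e * rho_bound + beta e.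
  by rewrite /rho_bound; field; lra.
elim: t => [|t IH] Ht.
  under eq_bigr do rewrite expr0 mulr1.
  by rewrite p_sum1 /rho_bound ler_pdivlMr; lra.
have step := expect_next_bit p_ge0 p_mart (g0 := fun s => beta e ^+ (rho s t).-1)
  (g1 := fun s => beta e ^+ (rho s t).+1) (h := fun s => lam e * beta e ^+ rho s t + beta e) Ht.
apply: le_trans (_ : \sum_(w : T.-tuple bool) p w * (lam e * beta e ^+ rho w t + beta e) <= _).
  under eq_bigr => w _ do rewrite /= /rho_step.
  under [X in _ <= X]eq_bigr => w _ do rewrite -(rho_take w (leqnn t)).
  apply: le_trans (step _); first by apply: ler_sum => w _; rewrite !rho_take //; case: ifP.
  by move=> s; apply: beta_rho_drift.
rewrite [X in _ <= X]bound_fix.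
under eq_bigr do rewrite mulrDr mulrCA.
rewrite big_split -mulr_sumr -big_distrl /= p_sum1 mul1r.
by apply: lerD => //; apply: ler_wpM2l; [lra | apply: IH; lia].
Qed.

Lemma expect_potential a d : (a + d <= T)%N ->
  \sum_(w : T.-tuple bool) p w * potential e (rho w (a + d)) (mu_rec w a d)
  <= lam e ^+ d * rho_bound.
Proof.
have l0 := lam_gt0 e_gt0 e_lt1.
elim: d => [|d IH] Had.
  under eq_bigr do rewrite addn0 /= potential_pos // subnn expr0 mulr1.
  by rewrite expr0 mul1r; apply: expect_beta_rho; lia.
set t := (a + d)%N.
have Ht : (t < T)%N by rewrite /t -addnS.
have step := expect_next_bit p_ge0 p_mart
  (g0 := fun s => potential e (rho s t).-1 (mu_step false (rho s t) (mu_rec s a d)))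
  (g1 := fun s => potential e (rho s t).+1 (mu_rec s a d + 1))
  (h := fun s => lam e * potential e (rho s t) (mu_rec s a d)) Ht.
apply: le_trans (_ : \sum_(w : T.-tuple bool) p w * (lam e * potential e (rho w t) (mu_rec w a d)) <= _).
  under eq_bigr => w _ do rewrite addnS /= /rho_step -/t.
  under [X in _ <= X]eq_bigr => w _ do rewrite -(rho_take w (leqnn t)) -(mu_rec_take w (leqnn t)).
  apply: le_trans (step _); last by move=> s; apply: potential_drift => //; apply: mu_rec_le_rho.
  apply: ler_sum => w _; rewrite rho_take // mu_rec_take //.
  by case: (nth false w t).
under eq_bigr do rewrite mulrCA.
rewrite -mulr_sumr exprS -mulrA; apply: ler_wpM2l; [lra | apply: IH; lia].
Qed.

Lemma Pr_bad_event_le s k :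
  Pr p (bad_event s k (T := T)) <= lam e ^+ k / (1 - lam e) * rho_bound.
Proof.
have l0 := lam_gt0 e_gt0 e_lt1; have l1 := lam_lt1 e_gt0.
have b1 := beta_ge1 e_gt0.
have B0 : 0 <= rho_bound by rewrite /rho_bound divr_ge0 //; lra.
pose S w := \sum_(d < T.+1 | (k <= d)%N && (s.-1 + d <= T)%N)
  potential e (rho w (s.-1 + d)) (mu_rec w s.-1 d).
have indicator_le w : (if `[< bad_event s k w >] then p w else 0) <= p w * S w.
  have S0 : 0 <= S w by apply: sumr_ge0 => d _; apply: potential_ge0.
  case: asboolP => [/bad_event_mu_rec [d [kd adT] mu0]|_]; last exact: mulr_ge0.
  rewrite -[X in X <= _]mulr1; apply: ler_wpM2l => //.
  have dT : (d < T.+1)%N by lia.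
  rewrite /S (bigD1 (Ordinal dT)) /=; last by rewrite kd adT.
  have [n mu_n] : exists n : nat, mu_rec w s.-1 d = n
    by exists `|mu_rec w s.-1 d|%N; lia.
  have n_le : (n <= rho w (s.-1 + d))%N by have := mu_rec_le_rho w s.-1 d; rewrite mu_n.
  rewrite mu_n -[1]addr0; apply: lerD; first exact: potential_ge1.
  by apply: sumr_ge0 => i _; apply: potential_ge0.
apply: le_trans (ler_sum _ (fun w _ => indicator_le w)) _.
under eq_bigr do rewrite mulr_sumr.
rewrite exchange_big /=.
apply: le_trans (_ : \sum_(d < T.+1 | (k <= d)%N) lam e ^+ d * rho_bound <= _).
  rewrite big_mkcondr /=; apply: ler_sum => d _.
  case: ifP => adT; first exact: expect_potential.
  by apply: mulr_ge0 => //; apply: exprn_ge0; lra.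
rewrite -mulr_suml; apply: ler_wpM2r => //.
by apply: sum_geometric_tail_le; rewrite l0.
Qed.

End Expectation.

Theorem corollary1 (R : realType) (eps : R) :
  0 < eps < 1 ->
  exists C c : R, 0 < C /\ 0 < c /\
    forall (T s k : nat) (p : T.-tuple bool -> R),
      is_distr p -> martingale_cond eps p ->
      Pr p (bad_event s k (T:=T)) <= C * expR (- (c * k%:R)).
Proof.
move=> /andP [e_gt0 e_lt1].
have l0 := lam_gt0 e_gt0 e_lt1; have l1 := lam_lt1 e_gt0; have b1 := beta_ge1 e_gt0.
exists (rho_bound eps / (1 - lam eps)), (- ln (lam eps)); split; [|split].
- by rewrite /rho_bound !divr_gt0 //; lra.
- by rewrite oppr_gt0 ln_lt0 // l0.
move=> T s k p p_distr p_mart.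
rewrite mulNr opprK expRM_natr lnK ?posrE // mulrAC -mulrA mulrC.
exact: Pr_bad_event_le.
Qed.
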